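(* Let $G=(V,E)$ be a simple undirected graph on $n$ nodes, let $0<\epsilon<\frac13$, $\delta>0$, $p\in(0,1)$, and let $D\subseteq V$ be an $\epsilon^3$-near clique with $|D|\ge\delta n$; let $C=K_{\epsilon^2}(D)\cap D$. Let $S=S^{(1)}\cup S^{(2)}$ be the random set where each node independently belongs to $S^{(1)}$ with probability $p_1=p/2$ and, independently, to $S^{(2)}$ with probability $p_2=\frac{p-p_1}{1-p_1}$ (so each node is in $S$ independently with probability $p$), and let $X^*=S^{(1)}\cap C$. Then $X^*$ is contained in a single connected component of $G[S]$ with probability at least $1-e^{-\Omega(\delta pn)}$.
   Context: $\Gamma(v)$ denotes the set of neighbors of $v$; $G[S]$ is the subgraph induced by $S$. For $Y\subseteq V$ and $0\le\eta\le1$: $K_\eta(Y)=\{v\in V: |\Gamma(v)\cap Y|\ge(1-\eta)|Y|\}$. Each undirected edge is counted as two directed edges; a set $D\subseteq V$ is a $\gamma$-near clique if $|\{(u,v)\in D\times D:\{u,v\}\in E\}|\ge(1-\gamma)|D|(|D|-1)$. $\Omega(\cdot)$ hides an absolute positive constant. *)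

From HB Require Import structures.
From mathcomp Require Import all_boot all_order all_algebra.
From mathcomp Require Import reals.
From mathcomp.analysis Require Import sequences exp.
Set Implicit Arguments.
Unset Strict Implicit.
Unset Printing Implicit Defensive.
Import Order.TTheory GRing.Theory Num.Theory.
Local Open Scope ring_scope.

Section Defs.
Variable R : realType.
Variable T : finType.
Variable e : rel T.

Definition nbhd (v : T) : {set T} := [set u | e v u].

Definition Kset (eta : R) (Y : {set T}) : {set T} :=
  [set v | (1 - eta) * #|Y|%:R <= #|nbhd v :&: Y|%:R].

Definition near_clique (gamma : R) (D : {set T}) : Prop :=
  (1 - gamma) * #|D|%:R * (#|D|%:R - 1) <=
  #|[set uv : T * T | [&& uv.1 \in D, uv.2 \in D & e uv.1 uv.2]]|%:R.

Definition induced_rel (S : {set T}) : rel T :=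
  [rel u v | [&& u \in S, v \in S & e u v]].

Definition in_one_component (S X : {set T}) : bool :=
  (X \subset S) &&
  [forall x in X, forall y in X, connect (induced_rel S) x y].

Definition set_weight (q : R) (S : {set T}) : R :=
  \prod_(v : T) (if v \in S then q else 1 - q).

(* probability of an event on (S1, S2), where S1 and S2 are independent,
   S1 contains each node independently with prob. q1, S2 with prob. q2 *)
Definition prob2 (q1 q2 : R) (P : {set T} -> {set T} -> bool) : R :=
  \sum_(S1 : {set T}) \sum_(S2 : {set T})
     set_weight q1 S1 * set_weight q2 S2 * (P S1 S2)%:R.
End Defs.

(* Call x \in S1 poorly linked if at most half of Z = S :&: D are neighbours
   of x.  Two nodes that are not poorly linked each see a strict majority of
   Z, hence have a common neighbour in Z, a subset of S; so X* lies in one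
   component of G[S] unless some x \in C is poorly linked.  A node x \in C
   has at least (1 - eps^2)|D| >= 8|D|/9 neighbours in D; bounding the
   indicator of "x poorly linked" by 2 [x \in S1] 2^(#|Z :\: N(x)| - #|Z :&: N(x)|)
   and using independence of the nodes gives probability at most
   p e^(-p|D|/3).  A union bound over C leaves failure probability at most
   t e^(-t/3) <= e^(-t/12) with t = p|D| >= delta p n, once t >= 64.  With
   c = e^(-64)/64 the claimed bound is at most e^(-t) when t < 64, and the
   event "S1 misses D", which forces X* = set0, has probability
   (1 - p/2)^|D| >= e^(-t). *)

From HB Require Import structures.
From mathcomp Require Import all_boot all_order all_algebra.
From mathcomp Require Import reals.
From mathcomp.analysis Require Import sequences exp.
From mathcomp Require Import ring lra zify.
Import Order.TTheory GRing.Theory Num.Theory.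
Set Implicit Arguments.
Unset Strict Implicit.
Unset Printing Implicit Defensive.
Local Open Scope ring_scope.

Lemma expRN_le1Bhalf (R : realType) (p : R) :
  0 <= p <= 1 -> expR (- p) <= 1 - p / 2.
Proof.
move=> /andP[p_ge0 p_le1]; rewrite expRN -div1r ler_pdivrMr ?expR_gt0 //.
have := expR_ge1Dx p; nra.
Qed.

Lemma mul_expRN_third_le (R : realType) (t : R) :
  64 <= t -> t * expR (- (t / 3)) <= expR (- (t / 12)).
Proof.
move=> t_ge64.
have exp_quarter : expR (t / 4) = expR (t / 8) * expR (t / 8).
  by rewrite -expRD; congr expR; lra.
have t_le : t <= expR (t / 4).
  by rewrite exp_quarter; have := expR_ge1Dx (t / 8); nra.
have -> : expR (- (t / 12)) = expR (t / 4) * expR (- (t / 3)).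
  by rewrite -expRD; congr expR; lra.
by apply: ler_wpM2r => //; apply: expR_ge0.
Qed.

Lemma one_subexpR_le_max (R : realType) (t y : R) :
  0 <= t -> y <= expR (- 64) / 64 * t ->
  1 - expR (- y) <= Num.max (expR (- t)) (1 - t * expR (- (t / 3))).
Proof.
move=> t_ge0 y_le; have exp64_le1 : expR (- 64 : R) <= 1 by rewrite expR_le1; lra.
have c_ge0 : 0 <= expR (- 64 : R) / 64 by rewrite divr_ge0 ?expR_ge0.
rewrite le_max; have [t_le64|t_gt64] := lerP t 64; apply/orP; [left|right].
  have := expR_ge1Dx (- y); have : expR (- 64) <= expR (- t) by rewrite ler_expR; lra.
  have : expR (- 64) / 64 * t <= expR (- 64) / 64 * 64 by rewrite ler_wpM2l.
  have -> : expR (- 64) / 64 * 64 = expR (- 64 : R) by field.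
  lra.
have y_le12 : y <= t / 12.
  apply: le_trans y_le _; rewrite mulrC ler_wpM2l //; lra.
rewrite lerD2l lerN2 (le_trans (mul_expRN_third_le (ltW t_gt64))) // ler_expR; lra.
Qed.

Lemma second_sample_prob (R : realType) (p : R) : 0 < p -> p < 1 ->
  let q2 := (p - p / 2) / (1 - p / 2) in
  0 <= q2 <= 1 /\ (1 - p / 2) * (1 - q2) = 1 - p.
Proof.
move=> p_gt0 p_lt1 q2.
have q2E : q2 = (p / 2) / (1 - p / 2) by rewrite /q2; congr (_ / _); lra.
split; last by rewrite q2E; field; lra.
by rewrite q2E divr_ge0 ?ler_pdivrMr /=; lra.
Qed.

Section PairExpectation.
Variables (R : realType) (T : finType).
Implicit Types (q : R) (S : {set T}).

Definition pair_expect q1 q2 (F : {set T} -> {set T} -> R) : R :=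
  \sum_(S1 : {set T}) \sum_(S2 : {set T})
     set_weight q1 S1 * set_weight q2 S2 * F S1 S2.

Lemma prob2E q1 q2 (P : {set T} -> {set T} -> bool) :
  prob2 q1 q2 P = pair_expect q1 q2 (fun S1 S2 => (P S1 S2)%:R).
Proof. by []. Qed.

Lemma eq_pair_expect q1 q2 (F G : {set T} -> {set T} -> R) :
  (forall S1 S2, F S1 S2 = G S1 S2) -> pair_expect q1 q2 F = pair_expect q1 q2 G.
Proof.
by move=> FG; apply: eq_bigr => S1 _; apply: eq_bigr => S2 _; rewrite FG.
Qed.

Lemma sum_set2_prod (K : T -> bool -> bool -> R) :
  \sum_(S1 : {set T}) \sum_(S2 : {set T}) \prod_v K v (v \in S1) (v \in S2) =
  \prod_v (K v true true + K v true false + K v false true + K v false false).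
Proof.
rewrite (eq_bigr (fun v => (K v true true + K v true false) +
   (K v false true + K v false false))); last by move=> v _; rewrite !addrA.
rewrite bigA_distr; apply: eq_bigr => S1 _.
rewrite (eq_bigr (fun v => K v (v \in S1) true + K v (v \in S1) false));
  last by move=> v _; case: (v \in S1).
rewrite bigA_distr; apply: eq_bigr => S2 _.
by apply: eq_bigr => v _; case: (v \in S2).
Qed.

Lemma pair_expect_prod q1 q2 (H : T -> bool -> bool -> R) :
  pair_expect q1 q2 (fun S1 S2 => \prod_v H v (v \in S1) (v \in S2)) =
  \prod_v (q1 * q2 * H v true true + q1 * (1 - q2) * H v true false
          + (1 - q1) * q2 * H v false true + (1 - q1) * (1 - q2) * H v false false).
Proof.
pose K v (b1 b2 : bool) := (if b1 then q1 else 1 - q1) *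
   (if b2 then q2 else 1 - q2) * H v b1 b2.
rewrite -[RHS](sum_set2_prod K); apply: eq_bigr => S1 _; apply: eq_bigr => S2 _.
rewrite /set_weight -!big_split /=; apply: eq_bigr => v _.
by rewrite /K; case: (v \in S1); case: (v \in S2).
Qed.

Lemma set_weight_ge0 q S : 0 <= q <= 1 -> 0 <= set_weight q S.
Proof.
by move=> /andP[q0 q1]; apply: prodr_ge0 => v _; case: (v \in S); rewrite ?subr_ge0.
Qed.

Lemma ler_pair_expect q1 q2 (F G : {set T} -> {set T} -> R) :
  0 <= q1 <= 1 -> 0 <= q2 <= 1 -> (forall S1 S2, F S1 S2 <= G S1 S2) ->
  pair_expect q1 q2 F <= pair_expect q1 q2 G.
Proof.
move=> q1_01 q2_01 FG; apply: ler_sum => S1 _; apply: ler_sum => S2 _.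
by apply: ler_wpM2l => //; apply: mulr_ge0; apply: set_weight_ge0.
Qed.

Lemma pair_expect1 q1 q2 : pair_expect q1 q2 (fun _ _ => 1) = 1.
Proof.
rewrite (@eq_pair_expect _ _ _
  (fun S1 S2 => \prod_v (fun _ _ _ => 1) v (v \in S1) (v \in S2))); last first.
  by move=> S1 S2; rewrite big1.
by rewrite (pair_expect_prod _ _ (fun _ _ _ => 1)) big1 // => v _; ring.
Qed.

Lemma pair_expect_1Bsum q1 q2 (I : finType) (A : {set I})
    (F : I -> {set T} -> {set T} -> R) :
  pair_expect q1 q2 (fun S1 S2 => 1 - \sum_(x in A) F x S1 S2) =
  1 - \sum_(x in A) pair_expect q1 q2 (F x).
Proof.
rewrite -{2}(pair_expect1 q1 q2) /pair_expect.
transitivity (\sum_(S1 : {set T}) \sum_(S2 : {set T})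
  (set_weight q1 S1 * set_weight q2 S2 * 1
   - \sum_(x in A) set_weight q1 S1 * set_weight q2 S2 * F x S1 S2)).
  by apply: eq_bigr => S1 _; apply: eq_bigr => S2 _; rewrite mulrBr mulr_sumr.
rewrite (exchange_big _ _ _ (mem A)) /= -sumrB; apply: eq_bigr => S1 _.
by rewrite (exchange_big _ _ _ (mem A)) /= -sumrB.
Qed.

Lemma sum_if_mem (A : {set T}) (k : R) :
  \sum_v (if v \in A then k else 0) = k * #|A|%:R.
Proof. by rewrite -big_mkcond /= sumr_const mulr_natr. Qed.

Lemma prod_if_mem (A : {set T}) (k : R) :
  \prod_v (if v \in A then k else 1) = k ^+ #|A|.
Proof. by rewrite -big_mkcond /= prodr_const. Qed.

End PairExpectation.

Lemma majorities_meet (T : finType) (Z A B : {set T}) :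
  (#|Z :\: A| < #|Z :&: A|)%N -> (#|Z :\: B| < #|Z :&: B|)%N ->
  exists w, w \in Z :&: A :&: B.
Proof.
move=> ltA ltB.
have [ZAB0|[w ZABw]] := set_0Vmem (Z :&: A :&: B); last by exists w.
have sub_compl (X Y : {set T}) : Z :&: X :&: Y = set0 -> Z :&: X \subset Z :\: Y.
  move=> ZXY0; apply/subsetP => w; rewrite !inE => /andP[wZ wX]; rewrite wZ andbT.
  by apply/negP => wY; have := in_set0 w; rewrite -ZXY0 !inE wZ wX wY.
have leAB := subset_leq_card (sub_compl A B ZAB0).
have leBA := subset_leq_card (sub_compl B A ltac:(by rewrite setIAC)).
lia.
Qed.

Lemma Kset_subset (R : realType) (T : finType) (e : rel T) (eta eta' : R)
    (Y : {set T}) :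
  eta <= eta' -> Kset e eta Y \subset Kset e eta' Y.
Proof.
move=> le_eta; apply/subsetP => v; rewrite !inE; apply: le_trans.
by apply: ler_wpM2r => //; lra.
Qed.

Section OneComponent.
Variables (R : realType) (T : finType) (e : rel T).
Hypotheses (e_sym : symmetric e) (e_irr : irreflexive e).
Implicit Types (D C S : {set T}) (x v : T).

Definition poorly_linked D x S1 S2 : bool :=
  let Z := (S1 :|: S2) :&: D in
  (x \in S1) && (#|Z :&: nbhd e x| <= #|Z :\: nbhd e x|)%N.

Lemma in_one_component_of_well_linked D C S1 S2 :
  (forall x, x \in C -> ~~ poorly_linked D x S1 S2) ->
  in_one_component e (S1 :|: S2) (S1 :&: C).
Proof.
move=> well_linked; apply/andP; split.
  by apply/subsetP => v; rewrite !inE => /andP[-> _].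
apply/forallP => x; apply/implyP; rewrite inE => /andP[xS1 xC].
apply/forallP => y; apply/implyP; rewrite inE => /andP[yS1 yC].
move: (well_linked x xC) (well_linked y yC).
rewrite /poorly_linked xS1 yS1 -!ltnNge => x_maj y_maj.
have [w] := majorities_meet x_maj y_maj.
rewrite !inE => /andP[/andP[/andP[wS _] exw] eyw].
apply: (connect_trans (y := w)); apply: connect1; rewrite /induced_rel /= !inE.
  by rewrite xS1 wS exw.
by rewrite yS1 wS e_sym.
Qed.

Definition linkage_weight D x v (b1 b2 : bool) : R :=
  if v == x then (if b1 then 2 else 0)
  else if (v \in D) && (b1 || b2) then (if e x v then 2^-1 else 2)
  else 1.

Lemma linkage_weight_ge0 D x v b1 b2 : 0 <= linkage_weight D x v b1 b2.
Proof.
rewrite /linkage_weight; case: (v == x); case: b1; case: b2; case: (v \in D);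
  case: (e x v) => //=; lra.
Qed.

(* Markov's inequality for 2 ^ (#|Z :\: N(x)| - #|Z :&: N(x)|); the factor
   at [v = x] pays for the condition [x \in S1]. *)
Lemma poorly_linked_le_prod D x S1 S2 : x \in D ->
  ((poorly_linked D x S1 S2)%:R : R) <=
  \prod_v linkage_weight D x v (v \in S1) (v \in S2).
Proof.
move=> xD; case pl: (poorly_linked D x S1 S2); last first.
  by apply: prodr_ge0 => v _; apply: linkage_weight_ge0.
move: pl; rewrite /poorly_linked => /andP[xS1 le_card].
set Z := (S1 :|: S2) :&: D in le_card.
rewrite (eq_bigr (fun v => (if v \in Z :\: nbhd e x then 2 else 1) *
    (if v \in Z :&: nbhd e x then 2^-1 else 1))); last first.
  move=> v _; rewrite /linkage_weight /Z !inE.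
  have [->|_] := eqVneq v x; first by rewrite xS1 xD e_irr /= mulr1.
  by case: (v \in S1); case: (v \in S2); case: (v \in D); case: (e x v);
    rewrite /= ?mulr1 ?mul1r.
rewrite big_split /= !prod_if_mem exprVn ler_pdivlMr ?exprn_gt0 // mul1r.
by rewrite ler_eXn2l // ltr1n.
Qed.

Variables (p q2 : R).

Lemma poorly_linked_prob D x :
  0 < p -> p < 1 -> 0 <= q2 <= 1 -> (1 - p / 2) * (1 - q2) = 1 - p ->
  x \in D -> x \in Kset e (9^-1 : R) D ->
  pair_expect (p / 2) q2 (fun S1 S2 => (poorly_linked D x S1 S2)%:R) <=
  p * expR (- (p * #|D|%:R / 3)).
Proof.
move=> p_gt0 p_lt1 q2_01 miss_prob xD; rewrite inE => x_linked.
have q1_01 : 0 <= p / 2 <= 1 by apply/andP; split; lra.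
apply: le_trans (ler_pair_expect q1_01 q2_01 (fun S1 S2 =>
  poorly_linked_le_prod S1 S2 xD)) _.
rewrite pair_expect_prod.
have w11 : 0 <= p / 2 * q2 by apply: mulr_ge0; lra.
have w10 : 0 <= p / 2 * (1 - q2) by apply: mulr_ge0; lra.
have w01 : 0 <= (1 - p / 2) * q2 by apply: mulr_ge0; lra.
(* A node of D contributes 1 - p/2 <= e^(-p/2) if it is a neighbour of x and
   1 + p <= e^p otherwise; at least 8/9 of D are neighbours. *)
pose a v := if v \in D then (if e x v then - (p / 2) else p) else 0.
have exp_half := expR_ge1Dx (- (p / 2)); have exp_p := expR_ge1Dx p.
apply: (@le_trans _ _ (\prod_v (if v == x then p else expR (a v)))).
  apply: ler_prod => v _; rewrite /linkage_weight /a.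
  have [_|_] /= := eqVneq v x; first by apply/andP; split; lra.
  by case: (v \in D); case: (e x v) => /=; rewrite ?expR0; apply/andP; split; lra.
rewrite (bigD1 x) //= eqxx.
rewrite (eq_bigr (fun v => expR (a v))); last by move=> v /negbTE ->.
apply: ler_wpM2l; first lra.
apply: (@le_trans _ _ (\prod_v expR (a v))).
  rewrite [X in _ <= X](bigD1 x) //=.
  apply: ler_peMl; first by apply: prodr_ge0 => v _; apply: expR_ge0.
  by rewrite /a xD e_irr; lra.
rewrite -expR_sum ler_expR.
rewrite (eq_bigr (fun v => (if v \in D then p else 0) -
   (if v \in nbhd e x :&: D then 3 * p / 2 else 0))); last first.
  by move=> v _; rewrite /a !inE; case: (v \in D); case: (e x v) => /=; lra.
by rewrite big_split /= sumrN !sum_if_mem; nra.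
Qed.

Lemma in_one_component0 S : in_one_component e S set0.
Proof. by rewrite /in_one_component sub0set; apply/forallP => x; rewrite inE. Qed.

Lemma one_component_ge_1Bsum D C S1 S2 :
  1 - \sum_(x in C) ((poorly_linked D x S1 S2)%:R : R) <=
  (in_one_component e (S1 :|: S2) (S1 :&: C))%:R.
Proof.
have [well_linked|] := boolP [forall x in C, ~~ poorly_linked D x S1 S2].
  rewrite (@in_one_component_of_well_linked D); last first.
    by move=> x xC; move/forall_inP: well_linked; apply.
  by rewrite lerBlDr lerDl sumr_ge0.
rewrite negb_forall_in => /exists_inP[x xC /negbNE x_poor].
rewrite (bigD1 x) //= x_poor; apply: le_trans (ler0n _ _).
by rewrite subr_le0 lerDl sumr_ge0.
Qed.

Lemma prob_one_component_ge_expR D C :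
  0 < p -> p < 1 -> 0 <= q2 <= 1 -> C \subset D ->
  expR (- (p * #|D|%:R)) <=
  prob2 (p / 2) q2 (fun S1 S2 => in_one_component e (S1 :|: S2) (S1 :&: C)).
Proof.
move=> p_gt0 p_lt1 /andP[q2_ge0 q2_le1] CD.
have q1_01 : 0 <= p / 2 <= 1 by apply/andP; split; lra.
have q2_01 : 0 <= q2 <= 1 by apply/andP.
pose unsampled v (b1 b2 : bool) : R := if (v \in D) && b1 then 0 else 1.
have unsampled_le S1 S2 : \prod_v unsampled v (v \in S1) (v \in S2) <=
    (in_one_component e (S1 :|: S2) (S1 :&: C))%:R.
  have [S1D0|[w]] := set_0Vmem (S1 :&: D).
    have -> : S1 :&: C = set0 by apply/eqP; rewrite -subset0 -S1D0 setIS.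
    rewrite in_one_component0 big1 // => v _.
    by rewrite /unsampled andbC -in_setI S1D0 in_set0.
  rewrite inE => /andP[wS1 wD].
  by rewrite (bigD1 w) //= /unsampled wD wS1 mul0r.
rewrite prob2E; apply: le_trans (ler_pair_expect q1_01 q2_01 unsampled_le).
rewrite pair_expect_prod.
apply: (@le_trans _ _ (\prod_v expR (if v \in D then - p else 0))).
  by rewrite -expR_sum ler_expR sum_if_mem; lra.
have exp_half : expR (- p) <= 1 - p / 2.
  by apply: expRN_le1Bhalf; apply/andP; split; lra.
apply: ler_prod => v _; rewrite /unsampled; case: (v \in D) => /=.
  by rewrite expR_ge0; lra.
by rewrite expR0; apply/andP; split; lra.
Qed.

Lemma prob_one_component_ge_union D C :
  0 < p -> p < 1 -> 0 <= q2 <= 1 -> (1 - p / 2) * (1 - q2) = 1 - p ->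
  C \subset Kset e (9^-1 : R) D :&: D ->
  1 - p * #|D|%:R * expR (- (p * #|D|%:R / 3)) <=
  prob2 (p / 2) q2 (fun S1 S2 => in_one_component e (S1 :|: S2) (S1 :&: C)).
Proof.
move=> p_gt0 p_lt1 q2_01 miss_prob C_linked.
have q1_01 : 0 <= p / 2 <= 1 by apply/andP; split; lra.
rewrite prob2E; apply: le_trans (ler_pair_expect q1_01 q2_01
  (one_component_ge_1Bsum D C)).
rewrite pair_expect_1Bsum lerD2l lerN2.
set b := p * expR (- (p * #|D|%:R / 3)).
apply: (@le_trans _ _ (\sum_(x in C) b)).
  apply: ler_sum => x xC.
  have /setIP[xK xD] := subsetP C_linked x xC.
  exact: poorly_linked_prob.
have le_CD : (#|C| <= #|D|)%N.
  by apply/subset_leq_card/(subset_trans C_linked)/subsetIr.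
rewrite sumr_const (le_trans (ler_wpMn2l _ le_CD)) // /b.
  by rewrite mulr_ge0 ?expR_ge0 // ltW.
by rewrite [X in _ <= X]mulrAC [X in _ <= X]mulr_natr.
Qed.
End OneComponent.

Theorem lemma5p5 (R : realType) :
  exists c : R, 0 < c /\
  forall (T : finType) (e : rel T), symmetric e -> irreflexive e ->
  forall (eps delta p : R), 0 < eps -> eps < 3^-1 -> 0 < delta ->
  0 < p -> p < 1 ->
  forall D : {set T},
    near_clique e (eps ^+ 3) D ->
    delta * #|T|%:R <= #|D|%:R ->
    let C := Kset e (eps ^+ 2) D :&: D in
    let p1 := p / 2 in
    let p2 := (p - p1) / (1 - p1) in
    1 - expR (- (c * delta * p * #|T|%:R)) <=
    prob2 p1 p2 (fun S1 S2 => in_one_component e (S1 :|: S2) (S1 :&: C)).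
Proof.
pose c : R := expR (- 64) / 64.
exists c; split; first by rewrite divr_gt0 ?expR_gt0.
move=> T e e_sym e_irr eps delta p eps_gt0 eps_lt3 _ p_gt0 p_lt1 D _ D_large.
cbv zeta; have [q2_01 miss_prob] := second_sample_prob p_gt0 p_lt1.
have C_linked : Kset e (eps ^+ 2) D :&: D \subset Kset e (9^-1 : R) D :&: D.
  by apply/setSI/Kset_subset; rewrite expr2; nra.
set t := p * #|D|%:R.
have t_ge0 : 0 <= t by rewrite mulr_ge0 // ltW.
have ct_ge : c * delta * p * #|T|%:R <= c * t.
  have -> : c * t = c * p * #|D|%:R by rewrite /t mulrA.
  have -> : c * delta * p * #|T|%:R = c * p * (delta * #|T|%:R) by ring.
  apply: ler_wpM2l => //.
  by rewrite mulr_ge0 ?divr_ge0 ?expR_ge0 // ltW.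
apply: le_trans (one_subexpR_le_max t_ge0 ct_ge) _.
rewrite ge_max; apply/andP; split.
  exact: prob_one_component_ge_expR (subsetIr _ _).
exact: prob_one_component_ge_union.
Qed.
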